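(* If $M$ is a non-zero finitely generated $A\mathcal{V}$-module, then $\mathrm{GKdim}_{A\mathcal{V}}(M)\ge n$.
   Context: Setup: $\Bbbk$ is an algebraically closed field of characteristic $0$; $A=\Bbbk[x_1,\dots,x_n]$; $\mathcal{V}=\mathrm{Der}(A)=\bigoplus_i A\,\partial/\partial x_i$. An $A\mathcal{V}$-module is a vector space $M$ that is an $A$-module and a $\mathcal{V}$-module satisfying $\eta(fm)=\eta(f)m+f(\eta m)$ for $\eta\in\mathcal{V}$, $f\in A$, $m\in M$; equivalently a module over the smash product algebra $A\#U(\mathcal{V})$ (the algebra on $A\otimes U(\mathcal{V})$ with $(f\#\eta)(g\#\mu)=f\eta(g)\#\mu+fg\#\eta\mu$). This algebra is finitely generated. $\mathrm{GKdim}_{A\mathcal{V}}$ denotes Gelfand–Kirillov dimension as an $A\#U(\mathcal{V})$-module: for a finitely generated unital algebra $R$ with finite-dimensional generating subspace $C\ni 1$ and a module $M$ with finite-dimensional generating subspace $M_0$, $\mathrm{GKdim}_R(M)=\limsup_{m\to\infty}\log_m\dim(C^mM_0)$, independent of choices. *)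

From Stdlib Require Import Reals.
From Coquelicot Require Import Coquelicot.
From HB Require Import structures.
From mathcomp Require Import all_boot all_algebra.
From mathcomp Require Import mpoly.
From Stdlib Require Import ClassicalDescription.

Set Implicit Arguments.
Unset Strict Implicit.
Unset Printing Implicit Defensive.

Import GRing.Theory.
Local Open Scope ring_scope.

Section AV.
Variables (K : fieldType) (n : nat).

Definition Apoly := {mpoly K[n]}.

(* V = Der(A) = (+)_i A d/dx_i : a derivation eta = sum_i eta_i d/dx_i is
   represented by its coefficient family (eta_i)_i. *)
Definition Vder := 'I_n -> Apoly.

Definition der_act (eta : Vder) (f : Apoly) : Apoly :=
  \sum_(i < n) eta i * mderiv i f.

Definition Vadd (eta mu : Vder) : Vder := fun i => eta i + mu i.
Definition Vscale (c : K) (eta : Vder) : Vder := fun i => c *: eta i.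

(* Lie bracket of derivations: [eta, mu] = eta o mu - mu o eta,
   whose i-th coefficient is eta(mu_i) - mu(eta_i). *)
Definition Vlie (eta mu : Vder) : Vder :=
  fun i => der_act eta (mu i) - der_act mu (eta i).

(* An AV-module structure on the K-vector space M: a (K-bilinear) A-module
   structure aA, a V-module (= Lie algebra representation, i.e. U(V)-module)
   structure aV, and the Leibniz compatibility. *)
Record is_AVmodule (M : lmodType K) (aA : Apoly -> M -> M) (aV : Vder -> M -> M)
  : Prop := {
  aA_addl : forall f g m, aA (f + g) m = aA f m + aA g m;
  aA_scalel : forall c f m, aA (c *: f) m = c *: aA f m;
  aA_linr : forall f c m m', aA f (c *: m + m') = c *: aA f m + aA f m';
  aA_one : forall m, aA 1 m = m;
  aA_mul : forall f g m, aA (f * g) m = aA f (aA g m);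
  aV_addl : forall eta mu m, aV (Vadd eta mu) m = aV eta m + aV mu m;
  aV_scalel : forall c eta m, aV (Vscale c eta) m = c *: aV eta m;
  aV_linr : forall eta c m m', aV eta (c *: m + m') = c *: aV eta m + aV eta m';
  aV_lie : forall eta mu m,
      aV eta (aV mu m) - aV mu (aV eta m) = aV (Vlie eta mu) m;
  aV_leibniz : forall eta f m,
      aV eta (aA f m) = aA (der_act eta f) m + aA f (aV eta m)
}.

(* Elements are represented by formal expressions (terms) in the generators
   f in A, eta in V, scalars c in K, with sum and product; [req] is the
   smallest congruence making the quotient a unital associative K-algebra in
   which f |-> tA f is a K-algebra map from A, eta |-> tV eta is K-linear with
   tV eta tV mu - tV mu tV eta = tV [eta,mu] (so U(V) maps in), and
   tV eta tA f = tA (eta f) + tA f tV eta.  This is the standard presentation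
   of A # U(V) (f#eta = (f#1)(1#eta)). *)
Inductive sterm : Type :=
  | tA of Apoly
  | tV of Vder
  | tK of K
  | tadd of sterm & sterm
  | tmul of sterm & sterm.

Inductive req : sterm -> sterm -> Prop :=
  | req_refl t : req t t
  | req_sym s t : req s t -> req t s
  | req_trans s t u : req s t -> req t u -> req s u
  | req_add s s' t t' : req s s' -> req t t' -> req (tadd s t) (tadd s' t')
  | req_mul s s' t t' : req s s' -> req t t' -> req (tmul s t) (tmul s' t')
  | req_addA s t u : req (tadd s (tadd t u)) (tadd (tadd s t) u)
  | req_addC s t : req (tadd s t) (tadd t s)
  | req_add0 t : req (tadd (tK 0) t) t
  | req_addN t : req (tadd (tmul (tK (-1)) t) t) (tK 0)
  | req_mulA s t u : req (tmul s (tmul t u)) (tmul (tmul s t) u)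
  | req_mul1l t : req (tmul (tK 1) t) t
  | req_mul1r t : req (tmul t (tK 1)) t
  | req_mulDl s t u : req (tmul (tadd s t) u) (tadd (tmul s u) (tmul t u))
  | req_mulDr s t u : req (tmul u (tadd s t)) (tadd (tmul u s) (tmul u t))
  | req_Kadd a b : req (tK (a + b)) (tadd (tK a) (tK b))
  | req_Kmul a b : req (tK (a * b)) (tmul (tK a) (tK b))
  | req_Kcomm c t : req (tmul (tK c) t) (tmul t (tK c))
  | req_Aadd f g : req (tA (f + g)) (tadd (tA f) (tA g))
  | req_Ascale c f : req (tA (c *: f)) (tmul (tK c) (tA f))
  | req_Amul f g : req (tA (f * g)) (tmul (tA f) (tA g))
  | req_Aone : req (tA 1) (tK 1)
  | req_Vadd eta mu : req (tV (Vadd eta mu)) (tadd (tV eta) (tV mu))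
  | req_Vscale c eta : req (tV (Vscale c eta)) (tmul (tK c) (tV eta))
  | req_Vlie eta mu :
      req (tmul (tV eta) (tV mu)) (tadd (tmul (tV mu) (tV eta)) (tV (Vlie eta mu)))
  | req_VA eta f :
      req (tmul (tV eta) (tA f)) (tadd (tA (der_act eta f)) (tmul (tA f) (tV eta))).

Inductive in_span (cs : seq sterm) : sterm -> Prop :=
  | in_span0 : in_span cs (tK 0)
  | in_spanS a c t : List.In c cs -> in_span cs t ->
      in_span cs (tadd (tmul (tK a) c) t).

Inductive in_alg (cs : seq sterm) : sterm -> Prop :=
  | in_alg_gen c : List.In c cs -> in_alg cs c
  | in_alg_K a : in_alg cs (tK a)
  | in_alg_add s t : in_alg cs s -> in_alg cs t -> in_alg cs (tadd s t)
  | in_alg_mul s t : in_alg cs s -> in_alg cs t -> in_alg cs (tmul s t).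

Definition gen_subspace (cs : seq sterm) : Prop :=
  (exists t, in_span cs t /\ req t (tK 1)) /\
  (forall f, exists t, in_alg cs t /\ req t (tA f)) /\
  (forall eta, exists t, in_alg cs t /\ req t (tV eta)).

Section Module.
Variables (M : lmodType K) (aA : Apoly -> M -> M) (aV : Vder -> M -> M).

Fixpoint tact (t : sterm) (m : M) : M :=
  match t with
  | tA f => aA f m
  | tV eta => aV eta m
  | tK c => c *: m
  | tadd s u => tact s m + tact u m
  | tmul s u => tact s (tact u m)
  end.

Definition gen_module (ms : seq M) : Prop :=
  forall v : M, exists ps : seq (sterm * M),
    all (fun p => p.2 \in ms) ps /\ v = \sum_(p <- ps) tact p.1 p.2.

Definition words (cs : seq sterm) (m : nat) : seq (seq sterm) :=
  iter m (fun W => [seq c :: w | c <- cs, w <- W]) [:: [::]].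

Definition word_act (w : seq sterm) (v : M) : M := foldr tact v w.

(* a spanning family of C^m M_0 *)
Definition layer (cs : seq sterm) (ms : seq M) (m : nat) : seq M :=
  [seq word_act w v | w <- words cs m, v <- ms].

Definition lin_indep (s : seq M) : Prop :=
  forall c : seq K, size c = size s ->
    \sum_(i < size s) c`_i *: s`_i = 0 -> forall i, (i < size s)%N -> c`_i = 0.

Definition pb (P : Prop) : bool :=
  if excluded_middle_informative P then true else false.

Definition dim_span (s : seq M) : nat :=
  \max_(k < (size s).+1 |
        pb (exists s', subseq s' s /\ size s' = val k /\ lin_indep s')) val k.

Definition GKdim (cs : seq sterm) (ms : seq M) : Rbar :=
  LimSup_seq (fun m => Rdiv (ln (INR (dim_span (layer cs ms m)))) (ln (INR m))).

End Module.
End AV.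

(* Bernstein's inequality.  A nonzero v in M generates a module over the Weyl
   algebra (x_i acting through A, d_i through V).  Let F_k be the span of the
   x^a d^b v with |a| + |b| <= k.  In characteristic 0, a Weyl element of degree
   at most k that kills F_k is zero: its commutators with the x_i and d_i are its
   partial derivatives, of lower degree.  Hence the (b+1)^(2n) monomials with all
   exponents at most b act independently as maps F_(2nb) -> F_(4nb), and
   (b+1)^(2n) <= dim F_(2nb) * dim F_(4nb) <= (dim F_(4nb))^2.  Since every
   generator of A # U(V) raises the filtration C^m M_0 by a bounded amount,
   F_k is contained in C^(d + c k) M_0, so dim C^m M_0 >= (m / C)^n for large m,
   which forces the Gelfand-Kirillov dimension to be at least n. *)

From Pilot Require Import Defs.
From Stdlib Require Import Reals Lra.
From Coquelicot Require Import Coquelicot.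
From HB Require Import structures.
From mathcomp Require Import all_boot all_algebra.
From mathcomp Require Import ssrcomplements mpoly zify.
From Stdlib Require Import FunctionalExtensionality Classical ClassicalEpsilon.

Set Implicit Arguments.
Unset Strict Implicit.
Unset Printing Implicit Defensive.

Import GRing.Theory.
Local Open Scope ring_scope.

Lemma foldr_perm_comm (T : eqType) (S : Type) (f : T -> S -> S) (x : S) :
  (forall a b y, f a (f b y) = f b (f a y)) ->
  forall s1 s2, perm_eq s1 s2 -> foldr f x s1 = foldr f x s2.
Proof.
move=> fC; elim=> [|a s1 IH] s2; first by rewrite perm_sym => /perm_small_eq ->.
move=> pe; have a_s2 : a \in s2 by rewrite -(perm_mem pe) mem_head.
have -> : foldr f x s2 = f a (foldr f x (rem a s2)).
  elim: s2 a_s2 {pe} => //= b s2 IH2.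
  have [<-|ne] //= := eqVneq b a.
  by rewrite in_cons eq_sym (negbTE ne) => /IH2 ->.
by rewrite /= (IH (rem a s2)) // -(perm_cons a) (permPl pe) perm_to_rem.
Qed.

Section LinearMap.
Variables (K : fieldType) (U V : lmodType K) (h : U -> V).
Hypothesis h_lin : linear h.

Lemma lmapD x y : h (x + y) = h x + h y.
Proof. by rewrite -{1}[x]scale1r h_lin scale1r. Qed.

Lemma lmap0 : h 0 = 0.
Proof. by apply: (addrI (h 0)); rewrite -lmapD !addr0. Qed.

Lemma lmapZ c x : h (c *: x) = c *: h x.
Proof. by rewrite -[c *: x]addr0 h_lin lmap0 addr0. Qed.

Lemma lmap_sum (I : Type) (r : seq I) (F : I -> U) :
  h (\sum_(i <- r) F i) = \sum_(i <- r) h (F i).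
Proof. by elim: r => [|a r IH]; rewrite ?big_nil ?lmap0 // !big_cons lmapD IH. Qed.

End LinearMap.

Section LinearSpan.
Variables (K : fieldType) (M : lmodType K).
Implicit Types (s : seq M) (x y : M).

Definition in_lspan s y : Prop := exists c : nat -> K, y = \sum_(i < size s) c i *: s`_i.

Lemma in_lspan0 s : in_lspan s 0.
Proof. by exists (fun _ => 0); rewrite big1 // => i _; rewrite scale0r. Qed.

Lemma in_lspanD s y z : in_lspan s y -> in_lspan s z -> in_lspan s (y + z).
Proof.
move=> [c ->] [d ->]; exists (fun i => c i + d i).
by rewrite -big_split; apply: eq_bigr => i _; rewrite scalerDl.
Qed.

Lemma in_lspanZ s a y : in_lspan s y -> in_lspan s (a *: y).
Proof.
move=> [c ->]; exists (fun i => a * c i).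
by rewrite scaler_sumr; apply: eq_bigr => i _; rewrite scalerA.
Qed.

Lemma in_lspan_sum s (I : Type) (r : seq I) (F : I -> M) :
  (forall i, in_lspan s (F i)) -> in_lspan s (\sum_(i <- r) F i).
Proof.
move=> sF; elim: r => [|a r IH]; first by rewrite big_nil; apply: in_lspan0.
by rewrite big_cons; apply: in_lspanD.
Qed.

Lemma in_lspan_mem s y : y \in s -> in_lspan s y.
Proof.
move=> ys; exists (fun j => (j == index y s)%:R).
have lt : (index y s < size s)%N by rewrite index_mem.
rewrite (bigD1 (Ordinal lt)) //= eqxx scale1r nth_index // big1 ?addr0 // => j nj.
by rewrite -(inj_eq val_inj) /= in nj; rewrite (negbTE nj) scale0r.
Qed.

Lemma in_lspan_trans s1 s2 y :
  (forall x, x \in s1 -> in_lspan s2 x) -> in_lspan s1 y -> in_lspan s2 y.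
Proof.
move=> s12 [c ->]; apply: in_lspan_sum => i; apply: in_lspanZ; apply: s12.
exact: mem_nth.
Qed.

Lemma lin_indep_cons s x : lin_indep s -> ~ in_lspan s x -> lin_indep (x :: s).
Proof.
move=> Hs Hx c sc Hsum0.
have Hsum : c`_0 *: x + \sum_(i < size s) c`_i.+1 *: s`_i = 0.
  by rewrite -[RHS]Hsum0 /= big_ord_recl.
have Hc0 : c`_0 = 0.
  apply/eqP; apply/negPn/negP => nz; apply: Hx.
  have -> : x = - (c`_0)^-1 *: \sum_(i < size s) c`_i.+1 *: s`_i.
    apply: (@scalerI _ _ c`_0) => //.
    rewrite scalerA mulrN mulfV // scaleN1r.
    by apply/eqP; rewrite -addr_eq0 Hsum.
  by apply: in_lspanZ; exists (fun i => c`_(i.+1)).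
move: Hsum; rewrite Hc0 scale0r add0r => Hsum.
case: c sc Hc0 Hsum Hsum0 => [|c0 c] //= [sc] -> Hsum _ [|i] //= lt.
exact: (Hs c sc).
Qed.

Lemma exists_basis_subseq (L : seq M) :
  exists B, [/\ subseq B L, lin_indep B & forall y, y \in L -> in_lspan B y].
Proof.
elim: L => [|x L [B [sB iB spB]]]; first by exists [::]; split => // c _ _ [].
have [xB|xB] := classic (in_lspan B x).
  exists B; split => //; first exact: (subseq_trans sB (subseq_cons L x)).
  by move=> y; rewrite in_cons => /orP [/eqP -> //|]; apply: spB.
exists (x :: B); split; [by rewrite /= eqxx | exact: lin_indep_cons |].
have sBxB y : y \in B -> in_lspan (x :: B) y.
  by move=> yB; apply: in_lspan_mem; rewrite in_cons yB orbT.
move=> y; rewrite in_cons => /orP [/eqP ->|yL]; first by apply/in_lspan_mem/mem_head.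
exact: (in_lspan_trans sBxB (spB y yL)).
Qed.

Lemma exists_nz_mulmx_eq0 (t d : nat) (C : 'M[K]_(t, d)) :
  (d < t)%N -> exists2 u : 'rV[K]_t, u != 0 & u *m C = 0.
Proof.
move=> lt_dt; have : kermx C != 0.
  rewrite kermx_eq0; apply/negP => /eqP rkC.
  by move: (rank_leq_col C); rewrite rkC leqNgt lt_dt.
have [i ri|] := pickP (fun i => row i (kermx C) != 0).
  by exists (row i (kermx C)) => //; rewrite -row_mul mulmx_ker row0.
move=> rows0 /negP []; apply/eqP/row_matrixP => i.
by rewrite row0; apply/eqP/negbFE/rows0.
Qed.

(* Each [f t i] is expanded in the spanning family [W]; a nonzero vector
   annihilating the [r * size W] coefficient columns gives the combination. *)
Lemma exists_vanishing_combination (N r : nat) (f : 'I_N -> 'I_r -> M) (W : seq M) :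
  (r * size W < N)%N -> (forall t i, in_lspan W (f t i)) ->
  exists2 u : 'rV[K]_N, u != 0 & forall i, \sum_t u 0 t *: f t i = 0.
Proof.
move=> lt_N fW.
have [coef coefE] : exists coef : 'I_N -> 'I_r -> nat -> K,
    forall t i, f t i = \sum_(j < size W) coef t i j *: W`_j.
  exists (fun t i => sval (constructive_indefinite_description _ (fW t i))).
  by move=> t i; case: constructive_indefinite_description.
pose C : 'M[K]_(N, r * size W) := \matrix_(t, k) mxvec (\matrix_(i, j) coef t i j) 0 k.
have [u nz_u uC] := exists_nz_mulmx_eq0 C lt_N.
exists u => // i; under eq_bigr => t _ do rewrite coefE scaler_sumr.
rewrite exchange_big /= big1 // => j _.
under eq_bigr => t _ do rewrite scalerA.
rewrite -scaler_suml.
have -> : \sum_t u 0 t * coef t i j = (u *m C) 0 (mxvec_index i j).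
  by rewrite !mxE; apply: eq_bigr => t _; rewrite mxE mxvecE mxE.
by rewrite uC mxE scale0r.
Qed.

Lemma lin_indep_size_le (V W : seq M) :
  lin_indep V -> (forall y, y \in V -> in_lspan W y) -> (size V <= size W)%N.
Proof.
move=> iV VW; rewrite leqNgt; apply/negP => lt_WV.
have lt1 : (1 * size W < size V)%N by rewrite mul1n.
have [u nz_u u0] := exists_vanishing_combination (f := fun t (_ : 'I_1) => V`_t) lt1
  (fun t _ => VW _ (mem_nth 0 (ltn_ord t))).
pose c := [seq u 0 t | t <- enum 'I_(size V)].
have cE (t : 'I_(size V)) : c`_t = u 0 t.
  by rewrite (nth_map t) ?size_enum_ord // nth_ord_enum.
have c0 := iV c (etrans (size_map _ _) (size_enum_ord _)).
move/negP: nz_u; apply; apply/eqP/rowP => t; rewrite mxE -cE c0 //.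
by rewrite -[RHS](u0 ord0); apply: eq_bigr => s _; rewrite cE.
Qed.

Lemma dim_span_ge (L V : seq M) :
  lin_indep V -> (forall y, y \in V -> in_lspan L y) -> (size V <= Defs.dim_span L)%N.
Proof.
move=> iV VL; have [B [sB iB spB]] := exists_basis_subseq L.
apply: (@leq_trans (size B)).
  by apply: lin_indep_size_le => // y yV; apply: (in_lspan_trans spB); exact: VL.
have lt : (size B < (size L).+1)%N by rewrite ltnS size_subseq.
apply: (@leq_bigmax_cond _ _ (fun k : 'I_(size L).+1 => val k) (Ordinal lt)) => /=.
by rewrite /pb; case: ClassicalDescription.excluded_middle_informative => // [[]]; exists B.
Qed.

End LinearSpan.

Section WeylOperators.
Variables (K : fieldType) (n : nat) (M : lmodType K).
Variables (aA : Apoly K n -> M -> M) (aV : Vder K n -> M -> M).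
Hypothesis HAV : is_AVmodule aA aV.

Let aA_lin f : linear (aA f) := aA_linr HAV f.
Let aV_lin eta : linear (aV eta) := aV_linr HAV eta.

Definition Vpartial (i : 'I_n) : Vder K n := fun j => ((i == j)%:R : Apoly K n).

Definition Xop (i : 'I_n) : M -> M := aA 'X_i.
Definition Dop (i : 'I_n) : M -> M := aV (Vpartial i).

Lemma Xop_lin i : linear (Xop i). Proof. exact: aA_lin. Qed.
Lemma Dop_lin i : linear (Dop i). Proof. exact: aV_lin. Qed.

Lemma der_act_Vpartial i f : der_act (Vpartial i) f = mderiv i f.
Proof.
rewrite /der_act (bigD1 i) //= /Vpartial eqxx mul1r big1 ?addr0 // => j nj.
by rewrite eq_sym (negbTE nj) mul0r.
Qed.

Lemma Dop_aA i f x : Dop i (aA f x) = aA (mderiv i f) x + aA f (Dop i x).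
Proof. by rewrite /Dop (aV_leibniz HAV) der_act_Vpartial. Qed.

Lemma Dop_comm i j x : Dop i (Dop j x) = Dop j (Dop i x).
Proof.
apply/eqP; rewrite -subr_eq0 /Dop (aV_lie HAV).
have -> : Vlie (Vpartial i) (Vpartial j) = Vscale 0 (Vpartial i).
  apply: functional_extensionality => k.
  by rewrite /Vlie /Vscale !der_act_Vpartial /Vpartial -!mpolyC_nat !mderivC subrr scale0r.
by rewrite (aV_scalel HAV) scale0r.
Qed.

Lemma Dop_Xop i j x : Dop i (Xop j x) = (j == i)%:R *: x + Xop j (Dop i x).
Proof.
rewrite /Xop Dop_aA mderivX mnm1E (aA_scalel HAV); congr (_ + _).
have [->|_] := eqVneq j i; last by rewrite !scale0r.
by rewrite -{1}[U_(i)%MM]add0m addmK mpolyX0 (aA_one HAV).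
Qed.

Definition Dword (s : seq 'I_n) (x : M) : M := foldr Dop x s.

Lemma Dword_lin s : linear (Dword s).
Proof. by elim: s => [|i s IH] c x y //=; rewrite IH Dop_lin. Qed.

Lemma Dword_perm s1 s2 x : perm_eq s1 s2 -> Dword s1 x = Dword s2 x.
Proof. exact: foldr_perm_comm Dop_comm s1 s2. Qed.

Lemma Dword_Xop s i x :
  Dword s (Xop i x) = Xop i (Dword s x) + (count_mem i s)%:R *: Dword (rem i s) x.
Proof.
elim: s => [|j s IH] /=; first by rewrite scale0r addr0.
rewrite IH (lmapD (Dop_lin j)) Dop_Xop (lmapZ (Dop_lin j)).
have [->|nij] := eqVneq j i; last by rewrite /= scale0r add0r add0n.
have -> : (count_mem i s)%:R *: Dop i (Dword (rem i s) x) = (count_mem i s)%:R *: Dword s x.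
  have [i_s|i_s] := boolP (i \in s); first by rewrite (Dword_perm x (perm_to_rem i_s)).
  by rewrite (count_memPn i_s) !scale0r.
by rewrite natrD scalerDl mulr1n scale1r addrAC addrC.
Qed.

Definition mnm_word (b : 'X_{1..n}) : seq 'I_n := flatten [seq nseq (b i) i | i <- enum 'I_n].

Lemma count_mnm_word (a : pred 'I_n) b :
  count a (mnm_word b) = (\sum_(i : 'I_n) a i * b i)%N.
Proof.
rewrite /mnm_word count_flatten sumnE !big_map.
by apply: eq_bigr => i _; rewrite count_nseq.
Qed.

Lemma count_mem_mnm_word i b : count_mem i (mnm_word b) = b i.
Proof.
rewrite count_mnm_word (bigD1 i) //= eqxx mul1n big1 ?addn0 // => j nj.
by rewrite (negbTE nj).
Qed.

Lemma perm_mnm_wordD b i : perm_eq (i :: mnm_word b) (mnm_word (b + U_(i))).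
Proof.
apply/permP => a; rewrite /= !count_mnm_word.
under [in RHS]eq_bigr => j _ do rewrite mnmDE mnm1E mulnDr.
rewrite big_split /= addnC; congr (_ + _)%N.
rewrite (bigD1 i) //= eqxx muln1 big1 ?addn0 // => j nj.
by rewrite eq_sym (negbTE nj) muln0.
Qed.

Definition Dmono (b : 'X_{1..n}) (x : M) : M := Dword (mnm_word b) x.

Lemma Dmono0 x : Dmono 0 x = x.
Proof.
rewrite /Dmono /mnm_word (eq_map (_ : _ =1 fun=> [::])); first by elim: (enum _).
by move=> i /=; rewrite mnm0E.
Qed.

Lemma Dop_Dmono b i x : Dop i (Dmono b x) = Dmono (b + U_(i)) x.
Proof. by rewrite /Dmono -(Dword_perm x (perm_mnm_wordD b i)). Qed.

Lemma Dmono_Dop b i x : Dmono b (Dop i x) = Dop i (Dmono b x).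
Proof.
rewrite /Dmono /Dword -foldr_rcons.
by apply: (foldr_perm_comm _ Dop_comm (s2 := i :: _)); rewrite perm_rcons.
Qed.

Lemma Dmono_Xop b i x :
  Dmono b (Xop i x) = Xop i (Dmono b x) + (b i)%:R *: Dmono (b - U_(i)) x.
Proof.
rewrite /Dmono Dword_Xop count_mem_mnm_word; congr (_ + _).
have [->|bi] := eqVneq (b i) 0%N; first by rewrite !scale0r.
congr (_ *: _); apply: Dword_perm.
have i_b : i \in mnm_word b by rewrite -has_pred1 has_count count_mem_mnm_word lt0n.
rewrite -(perm_cons i) -(permPl (perm_to_rem i_b)) perm_sym.
by have := perm_mnm_wordD (b - U_(i)) i; rewrite submK // lep1mP.
Qed.

Definition mnm_fst (m : 'X_{1..n + n}) : 'X_{1..n} := [multinom m (lshift n i) | i < n].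
Definition mnm_snd (m : 'X_{1..n + n}) : 'X_{1..n} := [multinom m (rshift n i) | i < n].

Lemma mnm_fstD m1 m2 : mnm_fst (m1 + m2) = (mnm_fst m1 + mnm_fst m2)%MM.
Proof. by apply/mnmP => i; rewrite !mnmE. Qed.
Lemma mnm_sndD m1 m2 : mnm_snd (m1 + m2) = (mnm_snd m1 + mnm_snd m2)%MM.
Proof. by apply/mnmP => i; rewrite !mnmE. Qed.
Lemma mnm_fstB m1 m2 : mnm_fst (m1 - m2) = (mnm_fst m1 - mnm_fst m2)%MM.
Proof. by apply/mnmP => i; rewrite !mnmE. Qed.
Lemma mnm_sndB m1 m2 : mnm_snd (m1 - m2) = (mnm_snd m1 - mnm_snd m2)%MM.
Proof. by apply/mnmP => i; rewrite !mnmE. Qed.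
Lemma mnm_fst0 : mnm_fst 0 = 0%MM.
Proof. by apply/mnmP => i; rewrite !mnmE. Qed.
Lemma mnm_snd0 : mnm_snd 0 = 0%MM.
Proof. by apply/mnmP => i; rewrite !mnmE. Qed.
Lemma mnm_fst_Ul i : mnm_fst U_(lshift n i) = U_(i)%MM.
Proof. by apply/mnmP => j; rewrite !mnmE eq_lshift. Qed.
Lemma mnm_snd_Ul i : mnm_snd U_(lshift n i) = 0%MM.
Proof. by apply/mnmP => j; rewrite !mnmE eq_lrshift. Qed.
Lemma mnm_fst_Ur i : mnm_fst U_(rshift n i) = 0%MM.
Proof. by apply/mnmP => j; rewrite !mnmE eq_rlshift. Qed.
Lemma mnm_snd_Ur i : mnm_snd U_(rshift n i) = U_(i)%MM.
Proof. by apply/mnmP => j; rewrite !mnmE eq_rshift. Qed.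

(* The normally ordered monomial [x^a d^b]; [m] lists [a] followed by [b]. *)
Definition weyl_mono (m : 'X_{1..n + n}) (x : M) : M :=
  aA 'X_[mnm_fst m] (Dmono (mnm_snd m) x).

Lemma weyl_mono_lin m : linear (weyl_mono m).
Proof. by move=> c x y; rewrite /weyl_mono /Dmono Dword_lin aA_lin. Qed.

Lemma weyl_mono0 x : weyl_mono 0 x = x.
Proof. by rewrite /weyl_mono mnm_fst0 mnm_snd0 Dmono0 mpolyX0 (aA_one HAV). Qed.

Lemma weyl_monoDl m i x : weyl_mono (m + U_(lshift n i)) x = Xop i (weyl_mono m x).
Proof.
rewrite /weyl_mono mnm_fstD mnm_sndD mnm_fst_Ul mnm_snd_Ul addm0 mpolyXD /Xop.
by rewrite mulrC (aA_mul HAV).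
Qed.

Lemma weyl_monoDr m i x : weyl_mono (m + U_(rshift n i)) x = weyl_mono m (Dop i x).
Proof.
by rewrite /weyl_mono mnm_fstD mnm_sndD mnm_fst_Ur mnm_snd_Ur addm0 -Dop_Dmono Dmono_Dop.
Qed.

Lemma Dop_weyl_mono m i x : Dop i (weyl_mono m x) =
  (m (lshift n i))%:R *: weyl_mono (m - U_(lshift n i)) x + weyl_mono m (Dop i x).
Proof.
rewrite /weyl_mono Dop_aA mderivX (aA_scalel HAV) mnm_fstB mnm_sndB mnm_fst_Ul.
by rewrite mnm_snd_Ul subm0 Dmono_Dop mnmE.
Qed.

Lemma weyl_mono_Xop m i x : weyl_mono m (Xop i x) =
  Xop i (weyl_mono m x) + (m (rshift n i))%:R *: weyl_mono (m - U_(rshift n i)) x.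
Proof.
rewrite /weyl_mono Dmono_Xop lmapD // lmapZ // mnm_fstB mnm_sndB mnm_fst_Ur mnm_snd_Ur.
by rewrite subm0 mnmE /Xop -!(aA_mul HAV) mulrC.
Qed.

Definition weyl_act (P : {mpoly K[n + n]}) (x : M) : M :=
  \sum_(m <- msupp P) P@_m *: weyl_mono m x.

Lemma weyl_actwE P k x : (msize P <= k)%N ->
  weyl_act P x = \sum_(m : 'X_{1..(n + n) < k}) P@_m *: weyl_mono m x.
Proof.
pose I : subFinType _ := 'X_{1..(n + n) < k}.
move=> le_Pk; rewrite /weyl_act (big_mksub I) /=; first last.
- by move=> m /msize_mdeg_lt/leq_trans/(_ le_Pk).
- exact: msupp_uniq.
by rewrite big_rmcond //= => m /memN_msupp_eq0 ->; rewrite scale0r.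
Qed.

Lemma weyl_act_linl x : linear (weyl_act ^~ x).
Proof.
move=> c P Q; pose k := maxn (msize P) (msize Q).
have le_P : (msize P <= k)%N := leq_maxl _ _.
have le_Q : (msize Q <= k)%N := leq_maxr _ _.
have le_cPQ : (msize (c *: P + Q) <= k)%N.
  by apply: leq_trans (msizeD_le _ _) _; rewrite geq_max le_Q (leq_trans (msizeZ_le _ _)).
rewrite /= !(weyl_actwE _ le_P, weyl_actwE _ le_Q, weyl_actwE _ le_cPQ).
rewrite scaler_sumr -big_split; apply: eq_bigr => m _.
by rewrite mcoeffD mcoeffZ scalerDl scalerA.
Qed.

Lemma weyl_act_lin P : linear (weyl_act P).
Proof.
move=> c x y; rewrite /weyl_act scaler_sumr -big_split; apply: eq_bigr => m _.
by rewrite weyl_mono_lin scalerDr !scalerA mulrC.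
Qed.

Lemma weyl_actX m x : weyl_act 'X_[m] x = weyl_mono m x.
Proof. by rewrite /weyl_act msuppX big_seq1 mcoeffX eqxx scale1r. Qed.

Lemma weyl_actC c x : weyl_act c%:MP x = c *: x.
Proof. by rewrite -[c%:MP]mulr1 mul_mpolyC -mpolyX0 (lmapZ (weyl_act_linl x)) weyl_actX weyl_mono0. Qed.

Lemma weyl_act_comb (I : Type) (r : seq I) (c : I -> K) (f : I -> 'X_{1..n + n}) x :
  weyl_act (\sum_(i <- r) c i *: 'X_[f i]) x = \sum_(i <- r) c i *: weyl_mono (f i) x.
Proof.
rewrite (lmap_sum (weyl_act_linl x)); apply: eq_bigr => i _.
by rewrite (lmapZ (weyl_act_linl x)) weyl_actX.
Qed.

Lemma mderiv_mpolyE (j : 'I_(n + n)) (Q : {mpoly K[n + n]}) :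
  mderiv j Q = \sum_(m <- msupp Q) (Q@_m * (m j)%:R) *: 'X_[m - U_(j)].
Proof.
rewrite {1}[Q]mpolyE raddf_sum /=; apply: eq_bigr => m _.
by rewrite mderivZ mderivX scalerA.
Qed.

Lemma Xop_weyl_act P i x : Xop i (weyl_act P x) = weyl_act ('X_[U_(lshift n i)] * P) x.
Proof.
rewrite {2}[P]mpolyE mulr_sumr.
under eq_bigr => m _ do rewrite -scalerAr -mpolyXD addmC.
rewrite weyl_act_comb /weyl_act (lmap_sum (Xop_lin i)); apply: eq_bigr => m _.
by rewrite weyl_monoDl (lmapZ (Xop_lin i)).
Qed.

Lemma weyl_act_Dop P i x : weyl_act P (Dop i x) = weyl_act ('X_[U_(rshift n i)] * P) x.
Proof.
rewrite {2}[P]mpolyE mulr_sumr.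
under eq_bigr => m _ do rewrite -scalerAr -mpolyXD addmC.
by rewrite weyl_act_comb /weyl_act; apply: eq_bigr => m _; rewrite weyl_monoDr.
Qed.

Lemma Dop_weyl_act P i x :
  Dop i (weyl_act P x) = weyl_act (mderiv (lshift n i) P) x + weyl_act P (Dop i x).
Proof.
rewrite mderiv_mpolyE weyl_act_comb /weyl_act (lmap_sum (Dop_lin i)) -big_split.
apply: eq_bigr => m _ /=.
by rewrite (lmapZ (Dop_lin i)) Dop_weyl_mono scalerDr scalerA.
Qed.

Lemma weyl_act_Xop P i x :
  weyl_act P (Xop i x) = Xop i (weyl_act P x) + weyl_act (mderiv (rshift n i) P) x.
Proof.
rewrite mderiv_mpolyE weyl_act_comb /weyl_act (lmap_sum (Xop_lin i)) -big_split.
apply: eq_bigr => m _ /=.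
by rewrite weyl_mono_Xop scalerDr scalerA (lmapZ (Xop_lin i)).
Qed.

End WeylOperators.

Lemma mnm_neq0P (k : nat) (m : 'X_{1..k}) : m != 0%MM -> exists j, m j != 0%N.
Proof.
move=> /eqP m_nz; have [j mj|m0] := pickP (fun j => m j != 0%N); first by exists j.
by case: m_nz; apply/mnmP => j; rewrite mnm0E; apply/eqP/negbFE/m0.
Qed.

Lemma mnm_split_ind (n : nat) (Pr : 'X_{1..n + n} -> Prop) :
  Pr 0%MM ->
  (forall m i, Pr m -> Pr (m + U_(lshift n i))%MM) ->
  (forall m i, Pr m -> Pr (m + U_(rshift n i))%MM) ->
  forall m, Pr m.
Proof.
move=> Pr0 Prl Prr m; elim: {m}(mdeg m) {-2}m (erefl (mdeg m)) => [|d IH] m dm.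
  by move/eqP: dm; rewrite mdeg_eq0 => /eqP ->.
have /mnm_neq0P [j mj] : m != 0%MM by apply/eqP => m0; move: dm; rewrite m0 mdeg0.
have mE : m = (m - U_(j) + U_(j))%MM by rewrite submK // lep1mP.
have dm' : mdeg (m - U_(j)) = d by move: dm; rewrite {1}mE mdegD mdeg1 addn1 => [[]].
rewrite mE; case: (splitP j) => i ji.
  have ej : j = lshift n i by apply: val_inj.
  by rewrite ej in dm' *; apply/Prl/IH.
have ej : j = rshift n i by apply: val_inj.
by rewrite ej in dm' *; apply/Prr/IH.
Qed.

Lemma mderiv_eq0_const (K : fieldType) (k : nat) (P : {mpoly K[k]}) :
  [pchar K] =i pred0 -> (forall j, mderiv j P = 0) -> P = (P@_0%MM)%:MP.
Proof.
move=> charK0 dP0; apply/mpolyP => m; rewrite mcoeffC.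
have [->|/mnm_neq0P [j mj]] := eqVneq m 0%MM; first by rewrite mulr1.
have := congr1 (mcoeff (m - U_(j))) (dP0 j).
rewrite mcoeff0 mcoeff_deriv submK ?lep1mP // => /eqP.
by rewrite mulr0 -mulr_natr mulf_eq0 (pcharf0P _).1 // orbF => /eqP.
Qed.

Lemma msize_XM (k : nat) (K : fieldType) (j : 'I_k) (Q : {mpoly K[k]}) d :
  (msize Q <= d)%N -> (msize ('X_[U_(j)] * Q) <= d.+1)%N.
Proof.
move=> le_Qd; rewrite msizeE; apply/bigmax_leqP_seq => m; rewrite mulrC.
rewrite (perm_mem (msuppMX _ _)) => /mapP [m' m'Q ->] _.
by rewrite mdegD mdeg1 add1n ltnS; exact: leq_trans (msize_mdeg_lt m'Q) le_Qd.
Qed.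

Lemma msize_mderiv (k : nat) (K : fieldType) (j : 'I_k) (Q : {mpoly K[k]}) d :
  (msize Q <= d.+1)%N -> (msize (mderiv j Q) <= d)%N.
Proof.
move=> le_Qd; rewrite msizeE; apply/bigmax_leqP_seq => m.
rewrite mcoeff_msupp mcoeff_deriv => nz _.
have : (m + U_(j))%MM \in msupp Q.
  by rewrite mcoeff_msupp; apply: contraNneq nz => ->; rewrite mul0rn.
move=> /msize_mdeg_lt; rewrite mdegD mdeg1 addn1 => lt.
by rewrite -ltnS; exact: leq_trans lt le_Qd.
Qed.

Section Bernstein.
Variables (K : fieldType) (n : nat) (M : lmodType K).
Variables (aA : Apoly K n -> M -> M) (aV : Vder K n -> M -> M).
Hypothesis HAV : is_AVmodule aA aV.
Hypothesis charK0 : [pchar K] =i pred0.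
Variable v : M.
Hypothesis v_nz : v != 0.

Local Notation weyl_act := (weyl_act aA aV).
Local Notation weyl_mono := (weyl_mono aA aV).

(* [F_k]; recall that [msize Q] is [deg Q + 1]. *)
Definition in_filtration k u :=
  exists2 Q : {mpoly K[n + n]}, (msize Q <= k.+1)%N & u = weyl_act Q v.

Lemma in_filtration_v k : in_filtration k v.
Proof. by exists 1%:MP; rewrite ?msizeC ?oner_neq0 // (weyl_actC HAV) scale1r. Qed.

Lemma in_filtration_le k k' u : (k <= k')%N -> in_filtration k u -> in_filtration k' u.
Proof. by move=> le_kk' [Q le_Q ->]; exists Q => //; apply: leq_trans le_Q _. Qed.

Lemma in_filtration_Xop k u i : in_filtration k u -> in_filtration k.+1 (Xop aA i u).
Proof.
move=> [Q le_Q ->]; exists ('X_[U_(lshift n i)] * Q); first exact: msize_XM.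
exact: Xop_weyl_act.
Qed.

Lemma in_filtration_Dop k u i : in_filtration k u -> in_filtration k.+1 (Dop aV i u).
Proof.
move=> [Q le_Q ->]; exists (mderiv (lshift n i) Q + 'X_[U_(rshift n i)] * Q).
  apply: leq_trans (msizeD_le _ _) _; rewrite geq_max msize_XM // andbT.
  by rewrite (leq_trans (msize_mderiv _ le_Q)) // leqW.
by rewrite Dop_weyl_act // weyl_act_Dop // (lmapD (weyl_act_linl _ _ _)).
Qed.

Lemma in_filtration_weyl_mono m k u :
  in_filtration k u -> in_filtration (k + mdeg m) (weyl_mono m u).
Proof.
elim/mnm_split_ind: m k u => [|m i IH|m i IH] k u Fu.
- by rewrite mdeg0 addn0 weyl_mono0.
- by rewrite weyl_monoDl // mdegD mdeg1 addn1 addnS; apply/in_filtration_Xop/IH.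
- rewrite weyl_monoDr // mdegD mdeg1 addn1 -addSnnS.
  exact/IH/in_filtration_Dop.
Qed.

(* Commuting with [x_i] and [d_i] differentiates the symbol, which lowers the
   degree, so induction on [k] reduces to constant symbols. *)
Lemma filtration_annihilator_eq0 k (P : {mpoly K[n + n]}) :
  (msize P <= k.+1)%N -> (forall u, in_filtration k u -> weyl_act P u = 0) -> P = 0.
Proof.
have const_eq0 c : weyl_act c%:MP v = 0 -> c%:MP = 0 :> {mpoly K[n + n]}.
  rewrite (weyl_actC HAV) => /eqP; rewrite scaler_eq0 (negbTE v_nz) orbF => /eqP ->.
  exact: mpolyC0.
elim: k P => [|k IH] P le_P Pann.
  have Pconst := msize1_polyC le_P.
  by rewrite Pconst const_eq0 // -Pconst Pann //; apply: in_filtration_v.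
have dP0 j : mderiv j P = 0.
  apply: IH => [|u Fu]; first exact: msize_mderiv.
  have Fu' := in_filtration_le (leqnSn k) Fu.
  case: (splitP j) => i ji.
    have -> : j = lshift n i by apply: val_inj.
    have := Dop_weyl_act HAV P i u.
    by rewrite (Pann _ Fu') (Pann _ (in_filtration_Dop i Fu)) addr0 (lmap0 (Dop_lin HAV i)) => <-.
  have -> : j = rshift n i by apply: val_inj.
  have := weyl_act_Xop HAV P i u.
  by rewrite (Pann _ Fu') (Pann _ (in_filtration_Xop i Fu)) (lmap0 (Xop_lin HAV i)) add0r => <-.
have Pconst := mderiv_eq0_const charK0 dP0.
by rewrite Pconst const_eq0 // -Pconst Pann //; apply: in_filtration_v.
Qed.

Definition filtration_gens k : seq M :=
  map (fun m : 'X_{1..(n + n) < k.+1} => weyl_mono m v) (index_enum 'X_{1..(n + n) < k.+1}).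

Lemma exists_filtration_basis k : exists B, [/\ lin_indep B,
  forall y, y \in B -> in_filtration k y & forall u, in_filtration k u -> in_lspan B u].
Proof.
have [B [sB iB spB]] := exists_basis_subseq (filtration_gens k).
exists B; split => // [y /(mem_subseq sB) /mapP [m _ ->]|u [Q le_Q ->]].
  by exists 'X_[m]; rewrite ?weyl_actX // msizeX bmdeg.
apply: (in_lspan_trans spB); rewrite (weyl_actwE _ _ _ le_Q).
apply: in_lspan_sum => m; apply/in_lspanZ/in_lspan_mem/map_f.
exact: mem_index_enum.
Qed.

Definition mnm_box b : seq 'X_{1..n + n} :=
  map (fun f : {ffun 'I_(n + n) -> 'I_b.+1} => [multinom val (f j) | j < n + n])
    (enum {ffun 'I_(n + n) -> 'I_b.+1}).

Lemma size_mnm_box b : size (mnm_box b) = (b.+1 ^ (n + n))%N.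
Proof. by rewrite size_map -cardE card_ffun !card_ord. Qed.

Lemma uniq_mnm_box b : uniq (mnm_box b).
Proof.
rewrite map_inj_uniq ?enum_uniq // => f1 f2 /mnmP f12; apply/ffunP => j.
by apply: val_inj; have := f12 j; rewrite !mnmE.
Qed.

Lemma mdeg_mnm_box b m : m \in mnm_box b -> (mdeg m <= (n + n) * b)%N.
Proof.
move=> /mapP [f _ ->]; rewrite mdegE -[X in (_ <= X * b)%N]card_ord -sum_nat_const.
by apply: leq_sum => i _; rewrite mnmE -ltnS ltn_ord.
Qed.

(* The [(b+1)^(2n)] monomials with exponents at most [b] have degree at most
   [k = 2nb]; by [filtration_annihilator_eq0] they act independently as maps
   [F_k -> F_(2k)], a space of dimension [dim F_k * dim F_(2k)]. *)
Lemma mnm_box_size_le b (B1 B2 : seq M) (k := ((n + n) * b)%N) :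
  (forall y, y \in B1 -> in_filtration k y) ->
  (forall u, in_filtration k u -> in_lspan B1 u) ->
  (forall u, in_filtration (k + k) u -> in_lspan B2 u) ->
  (b.+1 ^ (n + n) <= size B1 * size B2)%N.
Proof.
move=> B1F FB1 FB2; rewrite leqNgt; apply/negP; set bx := mnm_box b.
rewrite -(size_mnm_box b) -/bx => lt_bx.
have bxF (t : 'I_(size bx)) (i : 'I_(size B1)) : in_lspan B2 (weyl_mono (nth 0%MM bx t) B1`_i).
  apply/FB2/(in_filtration_le _ (in_filtration_weyl_mono _ (B1F _ (mem_nth 0 (ltn_ord i))))).
  by rewrite leq_add2l mdeg_mnm_box ?mem_nth.
have [u nz_u u0] := exists_vanishing_combination lt_bx bxF.
pose P : {mpoly K[n + n]} := \sum_(t < size bx) u 0 t *: 'X_[nth 0%MM bx t].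
have P0 : P = 0.
  apply: (@filtration_annihilator_eq0 k).
    apply: leq_trans (msize_sum _ _ _) _; apply/bigmax_leqP_seq => t _ _.
    by apply: leq_trans (msizeZ_le _ _) _; rewrite msizeX ltnS mdeg_mnm_box ?mem_nth.
  move=> w /FB1 [c ->]; rewrite (lmap_sum (weyl_act_lin HAV P)) big1 // => i _.
  by rewrite (lmapZ (weyl_act_lin HAV P)) weyl_act_comb u0 scaler0.
move/negP: nz_u; apply; apply/eqP/rowP => t; rewrite mxE.
have := congr1 (mcoeff (nth 0%MM bx t)) P0; rewrite mcoeff0 raddf_sum (bigD1 t) //=.
rewrite mcoeffZ mcoeffX eqxx mulr1 big1 ?addr0 // => s st.
by rewrite mcoeffZ mcoeffX nth_uniq ?uniq_mnm_box // (inj_eq val_inj) (negbTE st) mulr0.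
Qed.

Lemma bernstein_dim_bound b (L : seq M) :
  (forall u, in_filtration ((n + n) * b + (n + n) * b) u -> in_lspan L u) ->
  (b.+1 ^ n <= Defs.dim_span L)%N.
Proof.
move=> FL; set k := ((n + n) * b)%N in FL.
have [B1 [iB1 B1F FB1]] := exists_filtration_basis k.
have [B2 [iB2 B2F FB2]] := exists_filtration_basis (k + k).
have le_B12 : (size B1 <= size B2)%N.
  apply: lin_indep_size_le => // y /B1F Fy.
  exact/FB2/(in_filtration_le (leq_addr k k)).
have le_B2L : (size B2 <= Defs.dim_span L)%N.
  by apply: dim_span_ge => // y /B2F; apply: FL.
rewrite -leq_sqr -expnM muln2 -addnn.
apply: leq_trans (mnm_box_size_le B1F FB1 FB2) _.
by rewrite expnS expn1; apply: leq_mul; apply: leq_trans le_B2L.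
Qed.

End Bernstein.

Section Layers.
Variables (K : fieldType) (n : nat) (M : lmodType K).
Variables (aA : Apoly K n -> M -> M) (aV : Vder K n -> M -> M).
Hypothesis HAV : is_AVmodule aA aV.
Variables (cs : seq (sterm K n)) (ms : seq M).
Hypothesis Hcs : gen_subspace cs.

Local Notation tact := (tact aA aV).
Local Notation layer := (layer aA aV cs ms).

Lemma tact_lin t : linear (tact t).
Proof.
elim: t => [f|eta|a|s IHs u IHu|s IHs u IHu] c x y /=.
- exact: (aA_linr HAV).
- exact: (aV_linr HAV).
- by rewrite scalerDr !scalerA mulrC.
- by rewrite IHs IHu scalerDr addrACA.
- by rewrite IHu IHs.
Qed.

Lemma tact_req s t : req s t -> tact s =1 tact t.
Proof.
elim=> {s t} /=.
- by [].
- by move=> s t _ IH x.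
- by move=> s t u _ IH1 _ IH2 x; rewrite IH1 IH2.
- by move=> s s' t t' _ IH1 _ IH2 x; rewrite IH1 IH2.
- by move=> s s' t t' _ IH1 _ IH2 x; rewrite IH2 IH1.
- by move=> s t u x; rewrite addrA.
- by move=> s t x; rewrite addrC.
- by move=> t x; rewrite scale0r add0r.
- by move=> t x; rewrite scaleN1r addNr scale0r.
- by [].
- by move=> t x; rewrite scale1r.
- by move=> t x; rewrite scale1r.
- by [].
- by move=> s t u x; rewrite (lmapD (tact_lin u)).
- by move=> a b x; rewrite scalerDl.
- by move=> a b x; rewrite scalerA.
- by move=> c t x; rewrite (lmapZ (tact_lin t)).
- by move=> f g x; rewrite (aA_addl HAV).
- by move=> c f x; rewrite (aA_scalel HAV).
- by move=> f g x; rewrite (aA_mul HAV).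
- by move=> x; rewrite (aA_one HAV) scale1r.
- by move=> eta mu x; rewrite (aV_addl HAV).
- by move=> c eta x; rewrite (aV_scalel HAV).
- by move=> eta mu x; rewrite -(aV_lie HAV) addrC subrK.
- by move=> eta f x; rewrite (aV_leibniz HAV).
Qed.

Lemma word_act_allpairs_cons (cs' : seq (sterm K n)) (W : seq (seq (sterm K n))) :
  [seq word_act aA aV w v | w <- [seq c :: w | c <- cs', w <- W], v <- ms] =
  [seq tact c x | c <- cs', x <- [seq word_act aA aV w v | w <- W, v <- ms]].
Proof.
elim: cs' => [|c cs' IH] //.
by rewrite !allpairs_cons allpairs_cat IH allpairs_mapl map_allpairs.
Qed.

Lemma layerS m : layer m.+1 = [seq tact c x | c <- cs, x <- layer m].
Proof. by rewrite /layer /words iterS -/(words cs m) word_act_allpairs_cons. Qed.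

Lemma mem_allpairs_In (L : seq M) c x : List.In c cs -> x \in L ->
  tact c x \in [seq tact c x | c <- cs, x <- L].
Proof.
elim: cs => [|c' cs' IH] //= c_cs x_L; rewrite mem_cat.
by case: c_cs => [<-|/IH ->]; rewrite ?map_f ?orbT.
Qed.

Definition in_layer m y := in_lspan (layer m) y.

Lemma in_layer_tact m c y : List.In c cs -> in_layer m y -> in_layer m.+1 (tact c y).
Proof.
move=> c_cs [a ->]; rewrite (lmap_sum (tact_lin c)); apply: in_lspan_sum => i.
rewrite (lmapZ (tact_lin c)); apply/in_lspanZ/in_lspan_mem.
by rewrite layerS; apply: mem_allpairs_In c_cs (mem_nth 0 (ltn_ord i)).
Qed.

Lemma in_layer_span m t y : in_span cs t -> in_layer m y -> in_layer m.+1 (tact t y).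
Proof.
move=> t_cs y_m; elim: t_cs => [|a c t' c_cs _ IH] /=.
  by rewrite scale0r; apply: in_lspan0.
by apply/in_lspanD/IH/in_lspanZ; apply: in_layer_tact.
Qed.

Lemma in_layerS m y : in_layer m y -> in_layer m.+1 y.
Proof.
have [[t1 [t1_cs t1E]] _] := Hcs.
by move=> y_m; have := in_layer_span t1_cs y_m; rewrite (tact_req t1E) /= scale1r.
Qed.

Lemma in_layer_le m m' y : (m <= m')%N -> in_layer m y -> in_layer m' y.
Proof.
move=> /subnK <-; elim: (m' - m)%N => [|j IH] // y_m.
by rewrite addSn; apply/in_layerS/IH.
Qed.

Definition layer_shift t l := forall m y, in_layer m y -> in_layer (m + l) (tact t y).

Lemma layer_shift_le t l l' : (l <= l')%N -> layer_shift t l -> layer_shift t l'.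
Proof. by move=> le_l t_l m y y_m; apply: in_layer_le (t_l m y y_m); rewrite leq_add2l. Qed.

Lemma layer_shiftD s t l1 l2 :
  layer_shift s l1 -> layer_shift t l2 -> layer_shift (tadd s t) (maxn l1 l2).
Proof.
move=> s_l1 t_l2 m y y_m /=; apply: in_lspanD.
  exact: (layer_shift_le (leq_maxl _ _) s_l1).
exact: (layer_shift_le (leq_maxr _ _) t_l2).
Qed.

Lemma layer_shiftM s t l1 l2 :
  layer_shift s l1 -> layer_shift t l2 -> layer_shift (tmul s t) (l2 + l1).
Proof. by move=> s_l1 t_l2 m y y_m /=; rewrite addnA; apply/s_l1/t_l2. Qed.

Lemma layer_shiftK a : layer_shift (tK n a) 0.
Proof. by move=> m y y_m; rewrite addn0; apply: in_lspanZ. Qed.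

Lemma layer_shift_alg t : Defs.in_alg cs t -> exists l, layer_shift t l.
Proof.
elim=> {t} [c c_cs|a|s t _ [l1 s_l1] _ [l2 t_l2]|s t _ [l1 s_l1] _ [l2 t_l2]].
- by exists 1%N => m y y_m; rewrite addn1; apply: in_layer_tact.
- by exists 0%N; apply: layer_shiftK.
- by exists (maxn l1 l2); apply: layer_shiftD.
- by exists (l2 + l1)%N; apply: layer_shiftM.
Qed.

(* Generators of [A] and [V] are only known through expressions in [cs]. *)
Lemma layer_shift_exists t : exists l, layer_shift t l.
Proof.
have [_ [csA csV]] := Hcs.
have via_alg u : (exists t', Defs.in_alg cs t' /\ req t' u) -> exists l, layer_shift u l.
  move=> [t' [t'_cs t'E]]; have [l t'_l] := layer_shift_alg t'_cs.
  by exists l => m y y_m; rewrite -(tact_req t'E); apply: t'_l.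
elim: t => [f|eta|a|s [l1 s_l1] t [l2 t_l2]|s [l1 s_l1] t [l2 t_l2]].
- exact/via_alg/csA.
- exact/via_alg/csV.
- by exists 0%N; apply: layer_shiftK.
- by exists (maxn l1 l2); apply: layer_shiftD.
- by exists (l2 + l1)%N; apply: layer_shiftM.
Qed.

Lemma in_layer_ms u : u \in ms -> in_layer 0 u.
Proof. by move=> u_ms; apply: in_lspan_mem; rewrite /layer /= cats0 map_id_in. Qed.

Lemma in_layer_exists y : gen_module aA aV ms -> exists m, in_layer m y.
Proof.
move=> /(_ y) [ps [ps_ms ->]]; elim: ps ps_ms => [|p ps IH] /=.
  by exists 0%N; rewrite big_nil; apply: in_lspan0.
move=> /andP [p_ms /IH [m1 ps_m1]]; have [l p_l] := layer_shift_exists p.1.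
have := p_l 0%N _ (in_layer_ms p_ms); rewrite add0n => p_m.
exists (maxn l m1); rewrite big_cons; apply: in_lspanD.
  exact: in_layer_le (leq_maxl _ _) p_m.
exact: in_layer_le (leq_maxr _ _) ps_m1.
Qed.

Lemma weyl_layer_shift : exists l, forall i m y, in_layer m y ->
  in_layer (m + l) (Xop aA i y) /\ in_layer (m + l) (Dop aV i y).
Proof.
have /fin_all_exists [lX lX_sh] i := layer_shift_exists (tA 'X_i).
have /fin_all_exists [lD lD_sh] i := layer_shift_exists (tV (@Vpartial K n i)).
exists (\max_i maxn (lX i) (lD i)) => i m y y_m; split.
  by apply: (layer_shift_le _ (lX_sh i)) => //; apply: leq_trans (leq_maxl _ _) (leq_bigmax i).
by apply: (layer_shift_le _ (lD_sh i)) => //; apply: leq_trans (leq_maxr _ _) (leq_bigmax i).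
Qed.

Section Filtration.
Variable l : nat.
Hypothesis l_shift : forall i m y, in_layer m y ->
  in_layer (m + l) (Xop aA i y) /\ in_layer (m + l) (Dop aV i y).

Lemma in_layer_weyl_mono mu m x :
  in_layer m x -> in_layer (m + l * mdeg mu) (weyl_mono aA aV mu x).
Proof.
elim/mnm_split_ind: mu m x => [|mu i IH|mu i IH] m x x_m.
- by rewrite mdeg0 muln0 addn0 weyl_mono0.
- rewrite weyl_monoDl // mdegD mdeg1 mulnDr muln1 addnA.
  exact: (l_shift i (IH _ _ x_m)).1.
- rewrite weyl_monoDr // mdegD mdeg1 mulnDr muln1 (addnC (l * _)) addnA.
  exact/IH/(l_shift i x_m).2.
Qed.

Lemma in_layer_filtration v d k u :
  in_layer d v -> in_filtration aA aV v k u -> in_layer (d + l * k) u.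
Proof.
move=> v_d [Q le_Q ->]; rewrite (weyl_actwE _ _ _ le_Q); apply: in_lspan_sum => mu.
apply/in_lspanZ/(@in_layer_le (d + l * mdeg (bmnm mu))).
  by rewrite leq_add2l leq_mul2l -ltnS bmdeg orbT.
exact: in_layer_weyl_mono.
Qed.

End Filtration.

(* [F_k] of a nonzero [v] lies in [C^(d + l k) M_0], and [bernstein_dim_bound]
   applies with [k = 4nb]. *)
Lemma dim_layer_growth : [pchar K] =i pred0 -> (exists v : M, v != 0) ->
  gen_module aA aV ms -> exists d c : nat, (0 < c)%N /\
  forall m b, (d + c * b <= m)%N -> (b.+1 ^ n <= Defs.dim_span (layer m))%N.
Proof.
move=> charK0 [v v_nz] ms_gen; have [d v_d] := in_layer_exists v ms_gen.
have [l l_shift] := weyl_layer_shift.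
exists d, (l * ((n + n) + (n + n))).+1; split => // m b le_m.
apply: (bernstein_dim_bound HAV charK0 v_nz) => u Fu.
apply: in_layer_le (in_layer_filtration l_shift v_d Fu).
by apply: leq_trans le_m; rewrite leq_add2l -mulnDl mulnA mulSn leq_addl.
Qed.

End Layers.

Section LogGrowth.
Local Open Scope R_scope.

Lemma INR_expn a k : INR (a ^ k)%N = INR a ^ k.
Proof. by elim: k => [|k IH] //; rewrite expnS mulnE mult_INR IH. Qed.

Lemma LimSup_seq_ge (f : nat -> R) (L : R) :
  (forall eps, 0 < eps -> exists N, forall m, (N <= m)%N -> L - eps <= f m) ->
  Rbar_le L (LimSup_seq f).
Proof.
move=> f_ge; have le_eps eps : 0 < eps -> Rbar_le (L - eps) (LimSup_seq f).
  move=> eps_gt0; rewrite -(LimSup_seq_const (L - eps)); apply: LimSup_le.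
  by have [N fN] := f_ge eps eps_gt0; exists N => m /leP; apply: fN.
case: (LimSup_seq f) le_eps => [l| |] //= le_eps; last exact: le_eps 1 Rlt_0_1.
apply: Rnot_lt_le => lt_lL; have := le_eps ((L - l) / 2); rewrite /=; lra.
Qed.

(* [ln (u m) >= d (ln m - ln C)], and the error [d ln C / ln m] vanishes. *)
Lemma LimSup_log_ratio_ge (u : nat -> nat) (d : nat) (C : R) (m0 : nat) :
  0 < C -> (forall m, (m0 <= m)%N -> (INR m / C) ^ d <= INR (u m)) ->
  Rbar_le (INR d) (LimSup_seq (fun m => ln (INR (u m)) / ln (INR m))).
Proof.
move=> C_gt0 u_ge; apply: LimSup_seq_ge => eps eps_gt0.
set T := INR d * Rabs (ln C) / eps.
have [N0 [_ N0_gt]] := nfloor_ex (exp T) (Rlt_le _ _ (exp_pos T)).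
exists (maxn (maxn m0 2) N0.+1) => m; rewrite !geq_max => /andP [/andP [m0_m m_ge2] N0_m].
have m_ge : INR N0.+1 <= INR m /\ 2 <= INR m.
  by split; [|rewrite -[2]/(INR 2)]; apply/le_INR/leP.
have lm_gt0 : 0 < ln (INR m) by rewrite -ln_1; apply: ln_increasing; lra.
have T_le : T <= ln (INR m).
  rewrite -(ln_exp T); apply/Rlt_le/ln_increasing; first exact: exp_pos.
  by move: m_ge; rewrite S_INR; lra.
have mC_gt0 : 0 < INR m / C by apply: Rdiv_lt_0_compat; lra.
have lu : INR d * (ln (INR m) - ln C) <= ln (INR (u m)).
  rewrite -ln_div; try lra.
  rewrite -ln_pow //; apply: ln_le; [exact: pow_lt | exact: u_ge].
have dC : INR d * ln C <= eps * ln (INR m).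
  apply: Rle_trans (Rmult_le_compat_l _ _ _ (pos_INR d) (Rle_abs _)) _.
  apply: Rle_trans (Rmult_le_compat_l _ _ _ (Rlt_le _ _ eps_gt0) T_le).
  by rewrite /T; right; field; lra.
by apply/Rle_div_r => //; nra.
Qed.

Lemma growth_pow_bound (f : nat -> nat) (n d c : nat) : (0 < c)%N ->
  (forall m b, (d + c * b <= m)%N -> (b.+1 ^ n <= f m)%N) ->
  forall m, (d + d <= m)%N -> (INR m / INR (2 * c)) ^ n <= INR (f m).
Proof.
move=> c_gt0 f_ge m le_m; set b := ((m - d) %/ c)%N.
have ble : (d + c * b <= m)%N by rewrite mulnC; have := leq_divM (m - d) c; lia.
have mle : (m <= 2 * c * b.+1)%N by have := ltn_ceil (m - d) c_gt0; rewrite -/b; lia.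
have c2_gt0 : 0 < INR (2 * c) by apply/lt_0_INR/ltP; rewrite muln_gt0.
apply: Rle_trans (_ : INR b.+1 ^ n <= _); last first.
  by rewrite -INR_expn; apply/le_INR/leP/f_ge.
apply: pow_incr; split.
  by apply: Rmult_le_pos; [apply: pos_INR | apply/Rlt_le/Rinv_0_lt_compat].
by apply/Rle_div_l => //; rewrite -mult_INR; apply/le_INR/leP; rewrite multE mulnC.
Qed.

End LogGrowth.

Theorem lemma2p3 (K : closedFieldType) (n : nat) (charK0 : [pchar K] =i pred0)
  (M : lmodType K) (aA : Apoly K n -> M -> M) (aV : Vder K n -> M -> M)
  (HAV : is_AVmodule aA aV)
  (Hnz : exists v : M, v != 0)
  (Hfg : exists ms : seq M, gen_module aA aV ms) :
  forall (cs : seq (sterm K n)) (ms : seq M),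
    gen_subspace cs -> gen_module aA aV ms ->
    Rbar_le (Coquelicot.Rbar.Finite (INR n)) (GKdim aA aV cs ms).
Proof.
(* [Hfg] is subsumed by the given [ms]. *)
move=> cs ms Hcs Hms.
have [d [c [c_gt0 growth]]] := dim_layer_growth HAV Hcs charK0 Hnz Hms.
apply: (@LimSup_log_ratio_ge _ _ (INR (2 * c)) (d + d)).
  by apply/lt_0_INR/ltP; rewrite muln_gt0.
exact: growth_pow_bound c_gt0 growth.
Qed.
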